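(* Let $X$ be a set, $B=(B,+,0)$ a unitary magma, and let $(A,k,q,s,p)$ and $(A',k',q',s',p')$ be two retraction points from $X$ to $B$. If there exists a morphism of unitary magmas $\alpha\colon A\to A'$ such that $\alpha k=k'$, $\alpha s=s'$ and $q'\alpha=q$, then $\alpha$ is an isomorphism.
   Context: A unitary magma is a set with a binary operation $+$ and an element $0$ with $b+0=b=0+b$ for all $b$; morphisms preserve $+$ and $0$. Given a set $X$ and a unitary magma $B$, a retraction point from $X$ to $B$ is a tuple $(A,k,q,s,p)$ where $A=(A,+,0)$ is a unitary magma, $k\colon X\to A$ and $q\colon A\to X$ are maps, $s\colon B\to A$ and $p\colon A\to B$ are morphisms of unitary magmas, and $p(s(b))=b$, $q(k(x))=x$, $p(k(x))=0$, $q(s(b))=q(0)$, and $k(q(a))+s(p(a))=a$ for all $x\in X$, $b\in B$, $a\in A$. *)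

Set Implicit Arguments.

Record UMagma := {
  um_car :> Type;
  um_op : um_car -> um_car -> um_car;
  um_zero : um_car;
  um_right_unit : forall b, um_op b um_zero = b;
  um_left_unit : forall b, um_op um_zero b = b
}.

Arguments um_op {_} _ _.
Arguments um_zero {_}.

Definition is_um_morphism {A B : UMagma} (f : A -> B) : Prop :=
  (forall a1 a2 : A, f (um_op a1 a2) = um_op (f a1) (f a2)) /\ f um_zero = um_zero.

Definition is_retraction_point {X : Type} {B A : UMagma}
  (k : X -> A) (q : A -> X) (s : B -> A) (p : A -> B) : Prop :=
  is_um_morphism s /\ is_um_morphism p /\
  (forall b : B, p (s b) = b) /\
  (forall x : X, q (k x) = x) /\
  (forall x : X, p (k x) = um_zero) /\
  (forall b : B, q (s b) = q um_zero) /\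
  (forall a : A, um_op (k (q a)) (s (p a)) = a).

Definition is_um_isomorphism {A B : UMagma} (f : A -> B) : Prop :=
  is_um_morphism f /\
  exists g : B -> A, is_um_morphism g /\
    (forall a, g (f a) = a) /\ (forall b, f (g b) = b).

(* A compatible morphism alpha : A -> A' also commutes with the projections,
   p' (alpha a) = p a, because every a decomposes as k (q a) + s (p a).
   The decomposition a' = k' (q' a') + s' (p' a') in A' then suggests the
   inverse a' |-> k (q' a') + s (p' a'), and the inverse of a bijective
   morphism of unitary magmas is again a morphism. *)
From Stdlib Require Import Setoid.

Lemma um_morphism_inverse {A B : UMagma} (f : A -> B) (g : B -> A) :
  is_um_morphism f -> (forall a, g (f a) = a) -> (forall b, f (g b) = b) ->
  is_um_morphism g.
Proof.
  intros [f_op f_zero] gK fK. split.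
  - intros b1 b2. rewrite <- (fK b1), <- (fK b2), <- f_op, !gK. reflexivity.
  - rewrite <- f_zero. apply gK.
Qed.

Lemma um_isomorphism_of_inverse {A B : UMagma} (f : A -> B) (g : B -> A) :
  is_um_morphism f -> (forall a, g (f a) = a) -> (forall b, f (g b) = b) ->
  is_um_isomorphism f.
Proof.
  intros f_morph gK fK. split; [exact f_morph|].
  exists g. split; [|split; assumption].
  exact (um_morphism_inverse f g f_morph gK fK).
Qed.

Section RetractionPointMorphism.

Variables (X : Type) (B A A' : UMagma).
Variables (k : X -> A) (q : A -> X) (s : B -> A) (p : A -> B).
Variables (k' : X -> A') (q' : A' -> X) (s' : B -> A') (p' : A' -> B).
Hypothesis HR : is_retraction_point k q s p.
Hypothesis HR' : is_retraction_point k' q' s' p'.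
Variable alpha : A -> A'.
Hypothesis alpha_morph : is_um_morphism alpha.
Hypothesis alpha_k : forall x, alpha (k x) = k' x.
Hypothesis alpha_s : forall b, alpha (s b) = s' b.

Lemma retraction_point_morphism_p a : p' (alpha a) = p a.
Proof.
  destruct HR as [_ [_ [_ [_ [_ [_ decomp]]]]]].
  destruct HR' as [_ [[p'_op _] [p's' [_ [p'k' _]]]]].
  destruct alpha_morph as [alpha_op _].
  rewrite <- (decomp a) at 1.
  rewrite alpha_op, alpha_k, alpha_s, p'_op, p'k', p's'.
  apply um_left_unit.
Qed.

Definition retraction_point_inverse (a' : A') : A := um_op (k (q' a')) (s (p' a')).

Lemma retraction_point_inverseK a' : alpha (retraction_point_inverse a') = a'.
Proof.
  destruct HR' as [_ [_ [_ [_ [_ [_ decomp']]]]]].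
  destruct alpha_morph as [alpha_op _].
  unfold retraction_point_inverse.
  rewrite alpha_op, alpha_k, alpha_s. apply decomp'.
Qed.

Hypothesis alpha_q : forall a, q' (alpha a) = q a.

Lemma retraction_point_morphismK a : retraction_point_inverse (alpha a) = a.
Proof.
  destruct HR as [_ [_ [_ [_ [_ [_ decomp]]]]]].
  unfold retraction_point_inverse.
  rewrite alpha_q, retraction_point_morphism_p. apply decomp.
Qed.

End RetractionPointMorphism.

Arguments retraction_point_inverse {X B A A'} k s q' p' a'.

Theorem proposition2p3 (X : Type) (B A A' : UMagma)
  (k : X -> A) (q : A -> X) (s : B -> A) (p : A -> B)
  (k' : X -> A') (q' : A' -> X) (s' : B -> A') (p' : A' -> B)
  (HR : is_retraction_point k q s p)
  (HR' : is_retraction_point k' q' s' p')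
  (alpha : A -> A')
  (Halpha : is_um_morphism alpha)
  (Hk : forall x, alpha (k x) = k' x)
  (Hs : forall b, alpha (s b) = s' b)
  (Hq : forall a, q' (alpha a) = q a) :
  is_um_isomorphism alpha.
Proof.
  apply (um_isomorphism_of_inverse alpha (retraction_point_inverse k s q' p')).
  - exact Halpha.
  - intro a. eapply retraction_point_morphismK; eassumption.
  - intro a'. eapply retraction_point_inverseK; eassumption.
Qed.
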